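(* There exists a function $\delta$, defined on pairs of partitions, with the following two properties. (i) For every $T\ge 1$, every $K\ge 1$ and every two partitions $P=\{P_1,\dots,P_K\}$ and $Q=\{Q_1,\dots,Q_K\}$ of $\{1,\dots,T\}$ into $K$ nonempty clusters each, with clusters indexed so that $Q_k$ is regarded as the counterpart of $P_k$, we have $$\|M_P-M_Q\|_F^2 \;=\; 2\sum_{k=1}^K \frac{\epsilon_{k\to}+\epsilon_{\to k}}{|P_k|}\,\bigl(1+\delta(P,Q)\bigr).$$ (ii) The function $\delta$ satisfies $$\sup\bigl\{\,|\delta(P,Q)| \;:\; T\ge 1,\ K\ge 1,\ P,Q \text{ as in (i)},\ K\cdot m(P,Q)\le \epsilon\,\bigr\}\;\longrightarrow\;0 \quad\text{as } \epsilon\to 0 .$$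
   Context: For a partition $P$ of $\{1,\dots,T\}$ into nonempty clusters $P_1,\dots,P_K$, its rescaled equivalence matrix $M_P\in\mathbb{R}^{T\times T}$ is defined by $(M_P)_{ij}=1/|P_k|$ if $i$ and $j$ both lie in the same cluster $P_k$, and $(M_P)_{ij}=0$ otherwise; equivalently $M_P=Y(Y^\top Y)^{-1}Y^\top$ where $Y\in\{0,1\}^{T\times K}$ is the assignment matrix with $Y_{ik}=1$ iff $i\in P_k$. $\|\cdot\|_F$ is the Frobenius norm. For two partitions $P,Q$ as in the claim: for $k\ne l$, $\epsilon_{k\to l}=|P_k\cap Q_l|$; the outer flow is $\epsilon_{k\to}=\sum_{l\ne k}\epsilon_{k\to l}$; the inner flow is $\epsilon_{\to k}=\sum_{j\ne k}\epsilon_{j\to k}$; and $m(P,Q)=\max_{k\ne l}\dfrac{\epsilon_{k\to l}}{\min(|P_k|,|P_l|)}$ (with $m(P,Q)=0$ if $K=1$). *)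

From HB Require Import structures.
From mathcomp Require Import all_boot all_order all_algebra.
Set Implicit Arguments. Unset Strict Implicit. Unset Printing Implicit Defensive.
Import Order.TTheory GRing.Theory Num.Theory.
Local Open Scope ring_scope.

(* A partition of {1..T} into K indexed clusters is encoded by its labeling
   p : 'I_T -> 'I_K ; cluster P_k = { i | p i = k }. *)
Definition cluster (T K : nat) (p : 'I_T -> 'I_K) (k : 'I_K) : {set 'I_T} :=
  [set i | p i == k].

Definition nonempty_clusters (T K : nat) (p : 'I_T -> 'I_K) : Prop :=
  forall k : 'I_K, exists i : 'I_T, p i = k.

Definition resc_eqmx (R : realFieldType) (T K : nat) (p : 'I_T -> 'I_K)
  : 'M[R]_T :=
  \matrix_(i < T, j < T)
    (if p i == p j then (#|cluster p (p i)|%:R)^-1 else 0).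

Definition frob2 (R : realFieldType) (m n : nat) (A : 'M[R]_(m, n)) : R :=
  \sum_(i < m) \sum_(j < n) (A i j) ^+ 2.

Definition flow (T K : nat) (p q : 'I_T -> 'I_K) (k l : 'I_K) : nat :=
  #|cluster p k :&: cluster q l|.

Definition outflow (T K : nat) (p q : 'I_T -> 'I_K) (k : 'I_K) : nat :=
  (\sum_(l < K | l != k) flow p q k l)%N.

Definition inflow (T K : nat) (p q : 'I_T -> 'I_K) (k : 'I_K) : nat :=
  (\sum_(j < K | j != k) flow p q j k)%N.

(* m(P,Q) = max_{k<>l} eps_{k->l} / min(|P_k|,|P_l|), and 0 if K = 1
   (all terms are >= 0, so a max seeded with 0 is the same). *)
Definition mPQ (R : realFieldType) (T K : nat) (p q : 'I_T -> 'I_K) : R :=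
  \big[Num.max/0]_(k < K) \big[Num.max/0]_(l < K | l != k)
     ((flow p q k l)%:R / (minn #|cluster p k| #|cluster p l|)%:R).

From HB Require Import structures.
From mathcomp Require Import all_boot all_order all_algebra.
From mathcomp Require Import ring lra.
Import Order.TTheory GRing.Theory Num.Theory.
Local Open Scope ring_scope.

(* Write N_kl = |P_k ∩ Q_l|, a_k = |P_k| (row sums of N) and b_l = |Q_l|
   (column sums of N).  The point i contributes to row i of M_P - M_Q only
   through its labels (k, l), so ||M_P - M_Q||^2 equals the "discrepancy"
     D = sum_kl N_kl (1/a_k + 1/b_l - 2 N_kl / (a_k b_l)),
   while the sum S = sum_k (eps_{k->} + eps_{->k}) / |P_k| of the theorem is
   the "moved mass" sum_k (a_k - N_kk + b_k - N_kk) / a_k.  A purely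
   algebraic identity for nonnegative matrices with positive margins gives
     2 S - D = 2 sum_k defect_k,  defect_k >= 0,
   and when every off-diagonal N_kl is at most m min(a_k, a_l) with
   K m <= 1/2, each defect_k is at most 2 K m times the k-th term of S.
   Hence 0 <= 2S - D, and 2S - D <= 4 K m S when K m(P,Q) <= 1/2, so that
   delta := D / (2S) - 1 (and 0 if S = 0) satisfies D = 2 S (1 + delta)
   and then |delta| <= 2 K m(P,Q). *)

Section LabelCounting.
Context {T K : nat} (p q : 'I_T -> 'I_K).

Lemma sum_label_pairs {V : nmodType} (g : 'I_K -> 'I_K -> V) :
  \sum_i g (p i) (q i) = \sum_k \sum_l g k l *+ flow p q k l.
Proof.
rewrite pair_bigA (partition_big (fun i => (p i, q i)) xpredT) //=.
apply: eq_bigr => -[k l] _ /=.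
rewrite (eq_bigr (fun=> g k l)); last by move=> i /eqP[-> ->].
rewrite sumr_const /flow; congr (_ *+ _); apply: eq_card => i.
by rewrite !inE.
Qed.

Lemma card_cluster_row k : #|cluster p k| = (\sum_l flow p q k l)%N.
Proof.
rewrite /cluster -sum1dep_card (partition_big q xpredT) //=.
apply: eq_bigr => l _; rewrite sum1dep_card /flow.
by apply: eq_card => i; rewrite !inE.
Qed.

Lemma card_cluster_col l : #|cluster q l| = (\sum_k flow p q k l)%N.
Proof.
rewrite /cluster -sum1dep_card (partition_big p xpredT) //=.
apply: eq_bigr => k _; rewrite sum1dep_card /flow.
by apply: eq_card => i; rewrite !inE andbC.
Qed.

Lemma outflowE k : (outflow p q k + flow p q k k)%N = #|cluster p k|.
Proof. by rewrite (card_cluster_row k) (bigD1 k) //= addnC. Qed.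

Lemma inflowE k : (inflow p q k + flow p q k k)%N = #|cluster q k|.
Proof. by rewrite (card_cluster_col k) (bigD1 k) //= addnC. Qed.

End LabelCounting.

Lemma sum_offdiag_le {R : numDomainType} {K : nat} (f : 'I_K -> R) k (x : R) :
  0 <= x -> (forall l, l != k -> f l <= x) -> \sum_(l | l != k) f l <= K%:R * x.
Proof.
move=> x_ge0 f_le; apply: (@le_trans _ _ (\sum_(l | l != k) x)).
  exact: ler_sum.
rewrite mulr_natl -[K in _ *+ K]card_ord -sumr_const.
by rewrite [leRHS](bigD1 k) //= lerDr.
Qed.

Lemma sq_div_le {R : numFieldType} (x y z t : R) :
  0 <= x -> 0 < y -> 0 < z -> x <= t * z -> x ^+ 2 / (y * z) <= t * (x / y).
Proof.
move=> x_ge0 y_gt0 z_gt0 x_le.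
have -> : x ^+ 2 / (y * z) = (x / y) * (x / z) by field; rewrite ?gt_eqF.
have ratio_ge0 : 0 <= x / y by rewrite divr_ge0 // ltW.
by rewrite [leRHS]mulrC; apply: (ler_wpM2l ratio_ge0); rewrite ler_pdivrMr.
Qed.

Section FlowMatrix.
Context {R : realFieldType} {K : nat} (N : 'I_K -> 'I_K -> R) (a b : 'I_K -> R).

Definition discrepancy : R :=
  \sum_k \sum_l N k l * ((a k)^-1 + (b l)^-1 - 2 * (N k l / (a k * b l))).

Definition moved_mass : R := \sum_k ((a k - N k k) + (b k - N k k)) / a k.

Definition defect (k : 'I_K) : R :=
  (b k - N k k) ^+ 2 / (a k * b k) + \sum_(l | l != k) N k l ^+ 2 / (a k * b l).

Hypothesis row_sum : forall k, a k = \sum_l N k l.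
Hypothesis col_sum : forall l, b l = \sum_k N k l.
Hypothesis a_gt0 : forall k, 0 < a k.
Hypothesis b_gt0 : forall l, 0 < b l.

(* The key identity: twice the moved mass exceeds the discrepancy by twice
   the total defect.  It rests on sum_kl N_kl / a_k = sum_kl N_kl / b_l = K. *)
Lemma moved_mass_sub_discrepancy :
  2 * moved_mass - discrepancy = 2 * \sum_k defect k.
Proof.
have a_neq0 k : a k != 0 by rewrite gt_eqF.
have b_neq0 l : b l != 0 by rewrite gt_eqF.
have rows_normalized : \sum_k \sum_l N k l / a k = K%:R.
  rewrite -[K in K%:R]card_ord -sumr_const; apply: eq_bigr => k _.
  by rewrite -mulr_suml -row_sum divff.
have cols_normalized : \sum_k \sum_l N k l / b l = K%:R.
  rewrite exchange_big -[K in K%:R]card_ord -sumr_const; apply: eq_bigr => l _.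
  by rewrite -mulr_suml -col_sum divff.
have discrepancy_split : discrepancy = \sum_k \sum_l N k l / a k
    + \sum_k \sum_l N k l / b l - 2 * \sum_k \sum_l N k l ^+ 2 / (a k * b l).
  rewrite mulr_sumr -big_split /= -sumrB; apply: eq_bigr => k _.
  rewrite mulr_sumr -big_split /= -sumrB; apply: eq_bigr => l _.
  by field; rewrite ?a_neq0 ?b_neq0.
have defect_split k : defect k = ((a k - N k k) + (b k - N k k)) / a k - 1
    + \sum_l N k l ^+ 2 / (a k * b l).
  rewrite /defect [in RHS](bigD1 k) //= addrA; congr (_ + _).
  by field; rewrite ?a_neq0 ?b_neq0.
rewrite discrepancy_split rows_normalized cols_normalized /moved_mass.
under [in RHS]eq_bigr do rewrite defect_split.
rewrite !big_split /= sumrN sumr_const card_ord.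
rewrite [(1 : R) *+ K]/(K%:R); ring.
Qed.

Lemma defect_ge0 k : 0 <= defect k.
Proof.
have frac_ge0 x l : 0 <= x ^+ 2 / (a k * b l).
  by rewrite divr_ge0 ?sqr_ge0 // mulr_ge0 // ltW.
by rewrite addr_ge0 ?frac_ge0 // sumr_ge0.
Qed.

Hypothesis N_ge0 : forall k l, 0 <= N k l.

Section SmallFlows.
Variable m : R.
Hypothesis m_ge0 : 0 <= m.
Hypothesis flow_small :
  forall k l, l != k -> N k l <= m * a k /\ N k l <= m * a l.
Hypothesis Km_small : K%:R * m <= 1 / 2.

Lemma outflow_le k : \sum_(l | l != k) N k l <= K%:R * m * a k.
Proof.
rewrite -mulrA; apply: sum_offdiag_le => [|l /flow_small[] //].
by rewrite mulr_ge0 // ltW.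
Qed.

Lemma inflow_le k : \sum_(l | l != k) N l k <= K%:R * m * a k.
Proof.
rewrite -mulrA; apply: sum_offdiag_le => [|l]; first by rewrite mulr_ge0 // ltW.
by rewrite eq_sym => /flow_small[].
Qed.

(* Little mass leaves P_k, so Q_k keeps at least half of it. *)
Lemma row_le_twice_col k : a k <= 2 * b k.
Proof.
have row_k : a k = N k k + \sum_(l | l != k) N k l by rewrite row_sum (bigD1 k).
have col_k : b k = N k k + \sum_(l | l != k) N l k by rewrite col_sum (bigD1 k).
have inflow_ge0 : 0 <= \sum_(l | l != k) N l k by rewrite sumr_ge0.
have half_row : 0 <= (1 / 2 - K%:R * m) * a k.
  by rewrite mulr_ge0 ?subr_ge0 // ltW.
have := outflow_le k; lra.
Qed.

Lemma defect_le k :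
  defect k <= 2 * (K%:R * m) * (((a k - N k k) + (b k - N k k)) / a k).
Proof.
have m_le_Km : m <= K%:R * m.
  by rewrite ler_peMl // ler1n (leq_ltn_trans (leq0n k) (ltn_ord k)).
rewrite /defect.
have -> : a k - N k k = \sum_(l | l != k) N k l
  by rewrite row_sum (bigD1 k) //= addrC addrK.
have -> : b k - N k k = \sum_(l | l != k) N l k
  by rewrite col_sum (bigD1 k) //= addrC addrK.
have diag_term : (\sum_(l | l != k) N l k) ^+ 2 / (a k * b k)
    <= 2 * (K%:R * m) * ((\sum_(l | l != k) N l k) / a k).
  apply: sq_div_le; rewrite ?sumr_ge0 //.
  rewrite (le_trans (inflow_le k)) // mulrC [leRHS]mulrAC.
  by apply: ler_wpM2r; rewrite ?mulr_ge0 // row_le_twice_col.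
have offdiag_terms : \sum_(l | l != k) N k l ^+ 2 / (a k * b l)
    <= 2 * (K%:R * m) * ((\sum_(l | l != k) N k l) / a k).
  rewrite mulr_suml mulr_sumr; apply: ler_sum => l l_neq_k.
  apply: (@le_trans _ _ (2 * m * (N k l / a k))).
    apply: sq_div_le => //; have [_ N_le] := flow_small k l l_neq_k.
    rewrite (le_trans N_le) // mulrC [leRHS]mulrAC.
    by apply: ler_wpM2r; rewrite // row_le_twice_col.
  apply: ler_wpM2r; first by rewrite divr_ge0 // ltW.
  by apply: ler_wpM2l.
by rewrite [X in _ <= _ * X]mulrDl mulrDr addrC; apply: lerD.
Qed.

End SmallFlows.

End FlowMatrix.

Lemma sum_indicator {V : nmodType} (I : finType) (A : pred I) (x : V) :
  \sum_j (if j \in A then x else 0) = x *+ #|A|.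
Proof. by rewrite -big_mkcond sumr_const. Qed.

Lemma sum_sq_indicator_diff (R : comPzRingType) (I : finType) (A B : {set I})
    (x y : R) :
  \sum_j ((if j \in A then x else 0) - (if j \in B then y else 0)) ^+ 2
  = x ^+ 2 *+ #|A| + y ^+ 2 *+ #|B| - (x * y) *+ 2 *+ #|A :&: B|.
Proof.
rewrite -!sum_indicator -big_split -sumrB /=; apply: eq_bigr => j _.
by rewrite inE; case: (j \in A); case: (j \in B) => /=; ring.
Qed.

Lemma frob2_ge0 {R : realFieldType} {m n : nat} (A : 'M[R]_(m, n)) :
  0 <= frob2 A.
Proof. by apply: sumr_ge0 => i _; apply: sumr_ge0 => j _; apply: sqr_ge0. Qed.

Section Frobenius.
Context {R : realFieldType} {T K : nat} {p q : 'I_T -> 'I_K}.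

(* Row i of M_P - M_Q is (1/a) [j in P_(p i)] - (1/b) [j in Q_(q i)]; the
   cluster of a point is never empty. *)
Lemma frob2_resc_diff_row i :
  \sum_j ((resc_eqmx R p - resc_eqmx R q) i j) ^+ 2
  = (#|cluster p (p i)|%:R)^-1 + (#|cluster q (q i)|%:R)^-1
    - 2 * ((flow p q (p i) (q i))%:R
           / (#|cluster p (p i)|%:R * #|cluster q (q i)|%:R)).
Proof.
have in_cluster (r : 'I_T -> 'I_K) j : (j \in cluster r (r i)) = (r i == r j).
  by rewrite inE eq_sym.
have size_neq0 (r : 'I_T -> 'I_K) : (#|cluster r (r i)|%:R : R) != 0.
  by rewrite pnatr_eq0 -lt0n; apply/card_gt0P; exists i; rewrite inE.
under eq_bigr do rewrite !mxE -!in_cluster.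
rewrite sum_sq_indicator_diff /flow.
by field; rewrite ?size_neq0.
Qed.

Lemma frob2_resc_diff :
  frob2 (resc_eqmx R p - resc_eqmx R q)
  = discrepancy (fun k l => (flow p q k l)%:R)
      (fun k => #|cluster p k|%:R) (fun l => #|cluster q l|%:R).
Proof.
rewrite /frob2; under eq_bigr do rewrite frob2_resc_diff_row.
rewrite (sum_label_pairs p q (fun k l =>
  (#|cluster p k|%:R)^-1 + (#|cluster q l|%:R)^-1
  - 2 * ((flow p q k l)%:R / (#|cluster p k|%:R * #|cluster q l|%:R)) : R)).
by apply: eq_bigr => k _; apply: eq_bigr => l _; rewrite [RHS]mulr_natl.
Qed.

End Frobenius.

Lemma cluster_size_gt0 T K (p : 'I_T -> 'I_K) k :
  nonempty_clusters p -> (0 < #|cluster p k|)%N.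
Proof. by move=> /(_ k)[i pi]; apply/card_gt0P; exists i; rewrite inE pi. Qed.

Lemma mPQ_ge0 (R : realFieldType) T K (p q : 'I_T -> 'I_K) : 0 <= mPQ R p q.
Proof. exact: bigmax_ge_id. Qed.

Lemma flow_le_mPQ (R : realFieldType) T K (p q : 'I_T -> 'I_K) k l :
  nonempty_clusters p -> l != k ->
  ((flow p q k l)%:R : R) <= mPQ R p q * #|cluster p k|%:R /\
  ((flow p q k l)%:R : R) <= mPQ R p q * #|cluster p l|%:R.
Proof.
move=> nep l_neq_k.
set size_min := minn #|cluster p k| #|cluster p l|.
have size_min_gt0 : (0 : R) < size_min%:R.
  by rewrite ltr0n leq_min !cluster_size_gt0.
have ratio_le : (flow p q k l)%:R / size_min%:R <= mPQ R p q.
  by apply: le_trans (le_bigmax _ _ k); exact: le_bigmax_cond.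
rewrite ler_pdivrMr // in ratio_le.
have size_le r : (size_min <= r)%N -> (flow p q k l)%:R <= mPQ R p q * r%:R.
  move=> min_le; apply: le_trans ratio_le _.
  by apply: ler_wpM2l; rewrite ?mPQ_ge0 // ler_nat.
by split; apply: size_le; rewrite ?geq_minl ?geq_minr.
Qed.

Definition flow_mass (R : realFieldType) {T K : nat} (p q : 'I_T -> 'I_K) : R :=
  \sum_(k < K) ((outflow p q k + inflow p q k)%:R / #|cluster p k|%:R).

Section PartitionPair.
Context {R : realFieldType} {T K : nat} {p q : 'I_T -> 'I_K}.
Hypotheses (nep : nonempty_clusters p) (neq : nonempty_clusters q).

Let N k l : R := (flow p q k l)%:R.
Let a k : R := #|cluster p k|%:R.
Let b l : R := #|cluster q l|%:R.

Let row_sum k : a k = \sum_l N k l.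
Proof. by rewrite /a (card_cluster_row p q) natr_sum. Qed.

Let col_sum l : b l = \sum_k N k l.
Proof. by rewrite /b (card_cluster_col p q) natr_sum. Qed.

Let a_gt0 k : 0 < a k.
Proof. by rewrite ltr0n cluster_size_gt0. Qed.

Let b_gt0 l : 0 < b l.
Proof. by rewrite ltr0n cluster_size_gt0. Qed.

Let N_ge0 k l : 0 <= N k l.
Proof. exact: ler0n. Qed.

Let flow_mass_moved : flow_mass R p q = moved_mass N a b.
Proof.
apply: eq_bigr => k _; rewrite /a /b /N natrD.
by rewrite -(outflowE p q k) -(inflowE p q k) !natrD !addrK.
Qed.

Lemma flow_mass_defect :
  2 * flow_mass R p q - frob2 (resc_eqmx R p - resc_eqmx R q)
  = 2 * \sum_k defect N a b k.
Proof.
rewrite flow_mass_moved frob2_resc_diff.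
exact: (moved_mass_sub_discrepancy _ _ _ row_sum col_sum a_gt0 b_gt0).
Qed.

Lemma frob2_le_flow_mass :
  0 <= 2 * flow_mass R p q - frob2 (resc_eqmx R p - resc_eqmx R q).
Proof.
by rewrite flow_mass_defect mulr_ge0 // sumr_ge0 // => k _; exact: defect_ge0.
Qed.

Lemma frob2_ge_flow_mass :
  K%:R * mPQ R p q <= 1 / 2 ->
  2 * flow_mass R p q - frob2 (resc_eqmx R p - resc_eqmx R q)
  <= 4 * (K%:R * mPQ R p q) * flow_mass R p q.
Proof.
move=> Km_small; rewrite flow_mass_defect flow_mass_moved.
have -> : 4 * (K%:R * mPQ R p q) * moved_mass N a b
        = 2 * (2 * (K%:R * mPQ R p q) * moved_mass N a b) by ring.
apply: ler_wpM2l => //; rewrite mulr_sumr; apply: ler_sum => k _.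
apply: defect_le => //; first exact: mPQ_ge0.
by move=> k' l; apply: flow_le_mPQ.
Qed.

End PartitionPair.

Definition rel_err {R : realFieldType} (F S : R) : R :=
  if S == 0 then 0 else F / (2 * S) - 1.

Lemma rel_errE {R : realFieldType} {F S : R} :
  0 <= F -> 0 <= 2 * S - F -> F = 2 * S * (1 + rel_err F S).
Proof.
rewrite /rel_err; case: eqP => [-> | /eqP S_neq0] F_ge0 F_le.
  by rewrite mulr0 mul0r; lra.
by field.
Qed.

(* 0 <= 2S - F <= 4 c S pins delta in [-2c, 0]. *)
Lemma rel_err_le {R : realFieldType} {F S c : R} :
  0 <= c -> 0 <= F -> 0 <= 2 * S - F -> 2 * S - F <= 4 * c * S ->
  `|rel_err F S| <= 2 * c.
Proof.
rewrite /rel_err; case: eqP => [_ | /eqP S_neq0] c_ge0 F_ge0 F_le F_ge.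
  by rewrite normr0 mulr_ge0.
have twoS_gt0 : 0 < 2 * S by rewrite mulr_gt0 // lt_def S_neq0; lra.
set x := F / (2 * S).
have F_eq : F = 2 * S * x by rewrite /x mulrC divfK ?gt_eqF.
have x_le1 : 0 <= 1 - x.
  by rewrite -(pmulr_rge0 _ twoS_gt0) mulrBr mulr1 -F_eq.
have x_ge : 1 - x <= 2 * c.
  by rewrite -(ler_pM2l twoS_gt0) mulrBr mulr1 -F_eq; lra.
by rewrite ler_norml; apply/andP; split; lra.
Qed.

Theorem theoremA (R : realFieldType) :
  exists delta : forall T K : nat, ('I_T -> 'I_K) -> ('I_T -> 'I_K) -> R,
    (forall (T K : nat) (p q : 'I_T -> 'I_K),
        (0 < T)%N -> (0 < K)%N -> nonempty_clusters p -> nonempty_clusters q ->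
        frob2 (resc_eqmx R p - resc_eqmx R q)
        = 2 * (\sum_(k < K) ((outflow p q k + inflow p q k)%:R
                              / #|cluster p k|%:R))
            * (1 + delta T K p q))
    /\
    (forall e : R, 0 < e ->
       exists eps : R, 0 < eps /\
         forall (T K : nat) (p q : 'I_T -> 'I_K),
           (0 < T)%N -> (0 < K)%N -> nonempty_clusters p -> nonempty_clusters q ->
           K%:R * mPQ R p q <= eps -> `|delta T K p q| <= e).
Proof.
exists (fun T K p q =>
  rel_err (frob2 (resc_eqmx R p - resc_eqmx R q)) (flow_mass R p q)).
split=> [T K p q _ _ nep neq | e e_gt0].
  exact: rel_errE (frob2_ge0 _) (frob2_le_flow_mass nep neq).
exists (Num.min (1 / 2) (e / 2)); split=> [|T K p q _ _ nep neq].
  by rewrite lt_min; apply/andP; split; lra.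
rewrite le_min => /andP[Km_le_half Km_le_e].
have Km_ge0 : 0 <= K%:R * mPQ R p q by rewrite mulr_ge0 ?mPQ_ge0.
have := rel_err_le Km_ge0 (frob2_ge0 _) (frob2_le_flow_mass nep neq)
  (frob2_ge_flow_mass nep neq Km_le_half).
lra.
Qed.
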